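(* For every integer $n\geq2$, the $V^{n}$-move is not an unknotting operation on welded knots; that is, there is a welded knot (for instance the trefoil knot) which is not $V^{n}$-equivalent to the unknot.
   Context: A virtual link diagram is the image of an immersion of finitely many ordered, oriented circles in the plane with transverse double points, each a classical crossing (with over/under information) or a virtual crossing. Welded Reidemeister moves are R1–R3, the virtual moves VR1–VR4, and the OC move (a strand passing over two strands at classical crossings may slide across a virtual crossing of those two strands); a welded knot is an equivalence class of one-component diagrams under these moves. The $V^{n}$-move: inside a disk the diagram consists of two arcs $a,b$ oriented in the same direction; on one side they are parallel without crossings; on the other side the tangle is the $2$-braid word $(\sigma\tau)^{n}$, where $\sigma$ is a classical crossing with $b$ over $a$ and $\tau$ a virtual crossing (so $n$ classical crossings, all with $b$ over and of the same sign, alternating with $n$ virtual crossings). Two welded knots are $V^{n}$-equivalent if diagrams are related by $V^n$-moves and welded Reidemeister moves. A local move is an unknotting operation on welded knots if every welded knot is equivalent to the unknot under that move and welded Reidemeister moves. *)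

(* Welded knots are modelled by Gauss words
   (Gauss diagrams of one-component virtual diagrams), which forget virtual
   crossings; virtual moves VR1-VR4 and detour moves are thereby absorbed. *)
From mathcomp Require Import all_boot.
Set Implicit Arguments. Unset Strict Implicit. Unset Printing Implicit Defensive.

(* A letter of a Gauss word: (crossing label, over?, sign).
   over = true : the knot passes over the crossing at this point;
   sign = true / false encodes the two local writhes. *)
Definition letter := (nat * bool * bool)%type.
Definition lab (x : letter) : nat := x.1.1.
Definition isover (x : letter) : bool := x.1.2.
Definition sgn (x : letter) : bool := x.2.
Definition labels (w : seq letter) : seq nat := map lab w.

(* Words are read cyclically
   (rotation is one of the moves below). The empty word is the unknot. *)
Definition gauss_word (w : seq letter) : Prop :=
  forall a, a \in labels w -> exists e : bool,
    [/\ count_mem (a, true, e) w = 1%N, count_mem (a, false, e) w = 1%N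
      & count (fun x => lab x == a) w = 2%N].

(* T = top strand, M = middle, B = bottom; x = T over M, y = T over B,
   z = M over B.  The flag a_i records the order of the two crossings on
   strand i; the condition  e_ij + a_i + a_j  (mod 2) independent of the pair
   characterizes the realizable sign/order configurations. *)
Definition r3_config (T M B : seq letter) : Prop :=
  exists (x y z : nat) (ex ey ez a1 a2 a3 : bool),
    [/\ uniq [:: x; y; z],
        T = (if a1 then rev else id) [:: (x, true, ex); (y, true, ey)],
        M = (if a2 then rev else id) [:: (x, false, ex); (z, true, ez)]
      & B = (if a3 then rev else id) [:: (y, false, ey); (z, false, ez)]] /\
    ex (+) a1 (+) a2 = ey (+) a1 (+) a3 /\
    ey (+) a1 (+) a3 = ez (+) a2 (+) a3.

Inductive welded_step : seq letter -> seq letter -> Prop :=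
| ws_rot (u v : seq letter) : welded_step (u ++ v) (v ++ u)
| ws_relabel (w : seq letter) (f : nat -> nat) : injective f ->
    welded_step w (map (fun x => (f (lab x), isover x, sgn x)) w)
| ws_R1 (u v : seq letter) (a : nat) (o e : bool) :
    a \notin labels (u ++ v) ->
    welded_step (u ++ v) (u ++ [:: (a, o, e); (a, ~~ o, e)] ++ v)
| ws_R2 (u1 v u2 : seq letter) (a b : nat) (e : bool) (P : seq letter) :
    a \notin labels (u1 ++ v ++ u2) -> b \notin labels (u1 ++ v ++ u2) ->
    a != b ->
    (P = [:: (a, false, e); (b, false, ~~ e)] \/
     P = [:: (b, false, ~~ e); (a, false, e)]) ->
    welded_step (u1 ++ v ++ u2)
                (u1 ++ [:: (a, true, e); (b, true, ~~ e)] ++ v ++ P ++ u2)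
| ws_R3 (u1 X1 u2 X2 u3 X3 u4 T M B : seq letter) :
    r3_config T M B -> perm_eq [:: X1; X2; X3] [:: T; M; B] ->
    welded_step (u1 ++ X1 ++ u2 ++ X2 ++ u3 ++ X3 ++ u4)
                (u1 ++ rev X1 ++ u2 ++ rev X2 ++ u3 ++ rev X3 ++ u4)
| ws_OC (u v : seq letter) (a b : nat) (e f : bool) :
    welded_step (u ++ (a, true, e) :: (b, true, f) :: v)
                (u ++ (b, true, f) :: (a, true, e) :: v).

(* The V^n-move: on arc "a" insert n consecutive under-crossings c_1..c_n,
   on arc "b" the corresponding over-crossings in the same order, all of the
   same sign e (virtual crossings are invisible in Gauss words). Taking o
   either way covers both orders of the arcs along the knot. *)
Inductive Vn_step (n : nat) : seq letter -> seq letter -> Prop :=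
| vn_move (u1 v u2 : seq letter) (c : seq nat) (o e : bool) :
    size c = n -> uniq c -> all (fun a => a \notin labels (u1 ++ v ++ u2)) c ->
    Vn_step n (u1 ++ v ++ u2)
      (u1 ++ [seq (a, o, e) | a <- c] ++ v ++ [seq (a, ~~ o, e) | a <- c] ++ u2).

Inductive eq_closure (R : seq letter -> seq letter -> Prop)
  : seq letter -> seq letter -> Prop :=
| ec_refl w : eq_closure R w w
| ec_step w w' : R w w' -> eq_closure R w w'
| ec_sym w w' : eq_closure R w w' -> eq_closure R w' w
| ec_trans w1 w2 w3 : eq_closure R w1 w2 -> eq_closure R w2 w3 -> eq_closure R w1 w3.

Definition Vn_equivalent (n : nat) : seq letter -> seq letter -> Prop :=
  eq_closure (fun w w' => welded_step w w' \/ Vn_step n w w').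

(* A coloring of a Gauss word by a quandle Q gives every arc a color so that
   at each crossing the under-arc changes by the quandle operation with the
   color of the over-arc.  Having a nontrivial coloring is invariant under the
   welded moves: R1, R2 and R3 are the quandle axioms, and OC only exchanges
   two constraints on the same arc.  If moreover every right translation
   x |-> x <| y of Q has order dividing n, it is invariant under the V^n-move:
   the n new crossings lie under a single arc, so they can all be colored by
   its color y, and then they move the under-arc by the n-th power of the
   translation by y, i.e. not at all.
   For R = Z/n, the vectors of R^2 up to sign with the transvections
   x <|^(+-1) y = x +- w(x, y) y, w the standard symplectic form, form such a
   quandle, since the k-th power of the translation by y is
   x |-> x +- k w(x, y) y.  The trefoil is colored nontrivially by
   (1,0), (0,1), (1,1), while every coloring of the unknot is trivial. *)

From mathcomp Require Import all_boot all_algebra ring zify.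

Set Implicit Arguments.
Unset Strict Implicit.
Unset Printing Implicit Defensive.

Arguments lab !x /.
Arguments isover !x /.
Arguments sgn !x /.

Lemma labels_cat u v : labels (u ++ v) = labels u ++ labels v.
Proof. exact: map_cat. Qed.

Lemma labels_block (c : seq nat) o e : labels [seq (a, o, e) | a <- c] = c.
Proof. by rewrite /labels -map_comp map_id. Qed.

Lemma all_overs (c : seq nat) e : all isover [seq (a, true, e) | a <- c].
Proof. by apply/allP => _ /mapP[a _ ->]. Qed.

Lemma fresh_perm (N w w' : seq letter) : perm_eq w w' ->
  {in labels N, forall a, a \notin labels w} ->
  {in labels N, forall a, a \notin labels w'}.
Proof. by move=> ww' fresh a /fresh; rewrite (perm_mem (perm_map lab ww')). Qed.

Definition relabel (f : nat -> nat) (w : seq letter) : seq letter :=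
  [seq (f (lab x), isover x, sgn x) | x <- w].

Lemma labels_relabel f w : labels (relabel f w) = map f (labels w).
Proof. by rewrite /labels -!map_comp. Qed.

Lemma relabel_inverse f w : injective f -> exists g, relabel g (relabel f w) = w.
Proof.
move=> injf; exists (fun b => nth 0 (labels w) (index b (map f (labels w)))).
rewrite -[RHS]map_id /relabel -map_comp; apply/eq_in_map => x xw /=.
by rewrite index_map // nth_index ?(map_f lab xw) //; case: x {xw} => [[]].
Qed.

Definition passage (x : letter) := (lab x, isover x).
Definition uniq_passages w := uniq (map passage w).

Lemma uniq_passages_perm w w' :
  perm_eq w w' -> uniq_passages w = uniq_passages w'.
Proof. by move=> ww'; rewrite /uniq_passages (perm_uniq (perm_map _ ww')). Qed.

Lemma uniq_passages_insert N w w' : perm_eq w' (N ++ w) ->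
  uniq_passages N -> {in labels N, forall a, a \notin labels w} ->
  uniq_passages w' = uniq_passages w.
Proof.
move=> w'Nw uN fresh; rewrite (uniq_passages_perm w'Nw) /uniq_passages.
rewrite map_cat cat_uniq [uniq (map passage N)]uN /=.
suff -> : has (mem (map passage N)) (map passage w) = false by [].
apply/hasPn => _ /mapP[x xw ->]; apply/mapP => -[y yN [xy _]].
by have := fresh _ (map_f lab yN); rewrite -xy (map_f lab xw).
Qed.

Lemma uniq_passages_notin w w' a : uniq_passages (w ++ w') ->
  (a, true) \in map passage w -> (a, false) \in map passage w ->
  a \notin labels w'.
Proof.
rewrite /uniq_passages map_cat cat_uniq => /and3P[_ /hasPn disj _] aT aF.
apply/mapP => -[x xw' ax]; have := disj _ (map_f passage xw').
by rewrite /passage -ax; case: (isover x); rewrite ?aT ?aF.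
Qed.

Lemma uniq_passages_relabel f w :
  injective f -> uniq_passages (relabel f w) = uniq_passages w.
Proof.
move=> injf; rewrite /uniq_passages /relabel -map_comp.
rewrite (eq_map (_ : _ =1 (fun p => (f p.1, p.2)) \o passage)) // map_comp.
by rewrite map_inj_uniq // => -[a o] [b o'] /= [/injf-> ->].
Qed.

Lemma r3_config_rev T M B : r3_config T M B -> r3_config (rev T) (rev M) (rev B).
Proof.
move=> [x [y [z [ex [ey [ez [a1 [a2 [a3 [[xyz -> -> ->] [S1 S2]]]]]]]]]]].
exists x, y, z, ex, ey, ez, (~~ a1), (~~ a2), (~~ a3).
by split; [split; rewrite // -?fun_if; case: (a1); case: (a2); case: (a3); rewrite ?revK
          | rewrite !addbN !addNb !negbK].
Qed.

Lemma perm_rev_blocks (u1 X1 u2 X2 u3 X3 u4 : seq letter) :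
  perm_eq (u1 ++ X1 ++ u2 ++ X2 ++ u3 ++ X3 ++ u4)
          (u1 ++ rev X1 ++ u2 ++ rev X2 ++ u3 ++ rev X3 ++ u4).
Proof. by apply/permP => p; rewrite !count_cat !count_rev. Qed.

Lemma r3_frame u1 X1 u2 X2 u3 X3 u4 x y z ex ey ez (a1 a2 a3 : bool) :
  let T := (if a1 then rev else id) [:: (x, true, ex); (y, true, ey)] in
  let M := (if a2 then rev else id) [:: (x, false, ex); (z, true, ez)] in
  let B := (if a3 then rev else id) [:: (y, false, ey); (z, false, ez)] in
  let w := u1 ++ X1 ++ u2 ++ X2 ++ u3 ++ X3 ++ u4 in
  uniq_passages w -> perm_eq [:: X1; X2; X3] [:: T; M; B] ->
  [/\ infix T w, x \in labels w, z \in labels w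
    & z \notin labels (u1 ++ u2 ++ u3 ++ u4)].
Proof.
move=> T M B w uw XTMB; set Xs := X1 ++ X2 ++ X3.
have sub_Xs X : X \in [:: T; M; B] -> {subset X <= Xs}.
  by rewrite -(perm_mem XTMB) !inE => /or3P[]/eqP-> p pX; rewrite !mem_cat pX ?orbT.
have in_flip (a : bool) (p : letter) s :
    p \in s -> p \in (if a then rev else id) s.
  by case: a; rewrite ?mem_rev.
have xT : (x, true, ex) \in Xs.
  by apply: (sub_Xs T); rewrite ?inE ?eqxx //; apply: in_flip; rewrite mem_head.
have zM : (z, true, ez) \in Xs.
  by apply: (sub_Xs M); rewrite ?inE ?eqxx ?orbT //; apply: in_flip; rewrite !inE eqxx orbT.
have zB : (z, false, ez) \in Xs.
  by apply: (sub_Xs B); rewrite ?inE ?eqxx ?orbT //; apply: in_flip; rewrite !inE eqxx orbT.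
have wXs : perm_eq w (Xs ++ u1 ++ u2 ++ u3 ++ u4).
  by apply/permP => p; rewrite !count_cat; lia.
have Xs_w p : p \in Xs -> lab p \in labels w.
  by move=> pXs; apply: map_f; rewrite (perm_mem wXs) mem_cat pXs.
split; [|exact: Xs_w xT|exact: Xs_w zM|].
  have : T \in [:: X1; X2; X3] by rewrite (perm_mem XTMB) mem_head.
  rewrite !inE => /or3P[]/eqP->; first exact: infix_infix.
    by do 2 apply: infix_catl; apply: infix_infix.
  by do 4 apply: infix_catl; apply: infix_infix.
apply: (@uniq_passages_notin Xs); first by rewrite -(uniq_passages_perm wXs).
  exact: (map_f passage zM).
exact: (map_f passage zB).
Qed.

(** * Quandle colorings *)

Section Colorings.

(* [op] descends to a quandle structure on [Q] modulo [eqv], [op true] and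
   [op false] being the two (mutually inverse) quandle operations. *)
Variables (Q : Type) (eqv : rel Q) (op : bool -> Q -> Q -> Q).
Hypotheses (eqv_refl : reflexive eqv) (eqv_sym : symmetric eqv)
  (eqv_trans : transitive eqv).
Hypothesis opK : forall b y, cancel (op b y) (op (~~ b) y).
Hypothesis op_eqvl : forall b y y' x, eqv y y' -> op b y x = op b y' x.
Hypothesis op_eqvr : forall b y x x', eqv x x' -> eqv (op b y x) (op b y x').
Hypothesis opxx : forall b y, op b y y = y.
Hypothesis op_distr : forall b b' t m x,
  op b t (op b' m x) = op b' (op b t m) (op b t x).

Lemma eqv_transl y x z : eqv y x -> eqv y z -> eqv x z.
Proof. by rewrite eqv_sym; apply: eqv_trans. Qed.

Lemma opNK b y : cancel (op (~~ b) y) (op b y).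
Proof. by move=> x; rewrite -{1}[b]negbK opK. Qed.

Lemma op_id b y x : eqv y x -> op b y x = x.
Proof. by move=> yx; rewrite (op_eqvl _ _ yx) opxx. Qed.

Lemma eqv_opl b y x z : eqv (op b y x) z = eqv x (op (~~ b) y z).
Proof.
apply/idP/idP => [/(op_eqvr (~~ b) y)|/(op_eqvr b y)]; first by rewrite opK.
by rewrite opNK.
Qed.

Lemma eqv_op_id b y x : eqv (op b y x) y = eqv x y.
Proof. by rewrite eqv_opl opxx. Qed.

(* [col a] is the color of the over-arc at crossing [a]; [walk col c w] is
   the color of the arc reached by following [w] from an arc colored [c], or
   [None] if an over-passage contradicts [col]. *)
Fixpoint walk (col : nat -> Q) (c : Q) (w : seq letter) : option Q :=
  if w is x :: w' then
    if isover x then (if eqv c (col (lab x)) then walk col c w' else None)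
    else walk col (op (sgn x) (col (lab x)) c) w'
  else Some c.

Definition closes col c w := if walk col c w is Some d then eqv d c else false.
Definition monochrome col c w := all (fun a => eqv (col a) c) (labels w).
Definition coloring col c w := closes col c w && ~~ monochrome col c w.
Definition colorable w := exists col c, coloring col c w.

(* [uniq_passages] ensures that the crossing recolored by a Reidemeister III
   move occurs nowhere else in the word. *)
Definition simple_colorable w := uniq_passages w /\ colorable w.

Lemma monochrome_cat col c u v :
  monochrome col c (u ++ v) = monochrome col c u && monochrome col c v.
Proof. by rewrite /monochrome labels_cat all_cat. Qed.

Lemma monochrome_perm col c w w' :
  perm_eq w w' -> monochrome col c w = monochrome col c w'.
Proof. by move=> ww'; apply/perm_all/perm_map. Qed.

Lemma eq_monochrome col col' c w :
  {in labels w, col =1 col'} -> monochrome col c w = monochrome col' c w.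
Proof. by move=> eq_col; apply: eq_in_all => a /eq_col ->. Qed.

Lemma monochrome_eqv col c c' w :
  eqv c c' -> monochrome col c w -> monochrome col c' w.
Proof. by move=> cc' /allP mono; apply/allP => a /mono /eqv_trans; apply. Qed.

Lemma walk_cat col c u v :
  walk col c (u ++ v) = obind (walk col ^~ v) (walk col c u).
Proof.
elim: u c => [|x u IHu] c //=.
by case: (isover x); rewrite ?IHu //; case: (eqv _ _).
Qed.

Lemma walk_cat_congr col col' u u' v v' :
  (forall d, walk col' d u' = walk col d u) ->
  (forall d, walk col' d v' = walk col d v) ->
  forall d, walk col' d (u' ++ v') = walk col d (u ++ v).
Proof. by move=> eu ev d; rewrite !walk_cat eu; case: walk. Qed.

Lemma eq_walk col col' c w :
  {in labels w, col =1 col'} -> walk col c w = walk col' c w.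
Proof.
elim: w c => [|x w IHw] c //= eq_col.
have eq_colw : {in labels w, col =1 col'}.
  by move=> a aw; apply: eq_col; rewrite inE aw orbT.
rewrite eq_col ?mem_head //.
by case: (isover x); rewrite IHw //; case: (eqv _ _).
Qed.

Lemma walk_eqv col c c' w d : eqv c c' -> walk col c w = Some d ->
  exists2 d', walk col c' w = Some d' & eqv d d'.
Proof.
elim: w c c' => [|x w IHw] c c' cc' /=; first by case=> <-; exists c'.
case: (isover x); last by apply: IHw; apply: op_eqvr.
have -> : eqv c' (col (lab x)) = eqv c (col (lab x)).
  by apply/idP/idP => [|]; apply: eqv_trans; rewrite // eqv_sym.
by case: (eqv _ _) => //; apply: IHw.
Qed.

Lemma walk_monochrome col c w : monochrome col c w -> walk col c w = Some c.
Proof.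
elim: w => [|x w IHw] //= /andP[xc /IHw wc].
by case: (isover x); rewrite ?op_id // eqv_sym xc.
Qed.

Lemma walk_overs col d w : all isover w ->
  walk col d w = if monochrome col d w then Some d else None.
Proof.
rewrite /monochrome; elim: w => [|x w IHw] //= /andP[-> /IHw ->].
by rewrite eqv_sym; case: (eqv _ _).
Qed.

Lemma walk_infix col c w X d : walk col c w = Some d -> infix X w ->
  exists e e', walk col e X = Some e'.
Proof.
move=> walk_w /infixP[p [q wE]]; move: walk_w; rewrite wE !walk_cat.
case: (walk col c p) => //= e; rewrite walk_cat.
by case E: (walk col e X) => [e'|] // _; exists e, e'.
Qed.

Lemma walk_relabel col f c w : walk col c (relabel f w) = walk (col \o f) c w.
Proof. by elim: w c => [|x w IHw] c //=; case: (isover x); rewrite IHw. Qed.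

Lemma colorable_rot u v : colorable (u ++ v) -> colorable (v ++ u).
Proof.
move=> [col [c /andP[]]]; rewrite /closes walk_cat.
case Eu: (walk col c u) => [e|] //=; case Ev: (walk col e v) => [d|] // dc.
move=> nmono; exists col, e; apply/andP; split.
  have cd : eqv c d by rewrite eqv_sym.
  have [e' Eu' ee'] := walk_eqv cd Eu.
  by rewrite /closes walk_cat Ev /= Eu' eqv_sym.
apply: contra nmono => mono.
move: (mono); rewrite monochrome_cat => /andP[/walk_monochrome].
rewrite Ev => -[de] _; rewrite monochrome_cat andbC -monochrome_cat.
by apply: monochrome_eqv mono; rewrite -de.
Qed.

Lemma colorable_rotE u v : colorable (u ++ v) <-> colorable (v ++ u).
Proof. by split; apply: colorable_rot. Qed.

Lemma colorable_relabel f w : colorable (relabel f w) -> colorable w.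
Proof.
move=> [col [c colc]]; exists (col \o f), c.
by move: colc; rewrite /coloring /closes /monochrome walk_relabel labels_relabel all_map.
Qed.

Lemma relabel_colorable f w : injective f -> colorable w -> colorable (relabel f w).
Proof. by move=> /(relabel_inverse w)[g gK]; rewrite -{1}gK => /colorable_relabel. Qed.

Lemma coloring_block col c u s t v : perm_eq s t ->
  (forall d, walk col d s = walk col d t) ->
  coloring col c (u ++ s ++ v) = coloring col c (u ++ t ++ v).
Proof.
move=> st walk_st; rewrite /coloring /closes /monochrome !walk_cat.
congr (_ && ~~ _); first by case: (walk col c u) => //= d; rewrite !walk_cat walk_st.
by apply: perm_all; apply: perm_map; rewrite perm_cat2l perm_cat2r.
Qed.

Lemma colorable_swap_overs u p q v : isover p -> isover q ->
  colorable (u ++ [:: p; q] ++ v) -> colorable (u ++ [:: q; p] ++ v).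
Proof.
move=> po qo [col [c colc]]; exists col, c.
rewrite -(@coloring_block col c u [:: p; q]) // => [|d].
  exact: (permEl (perm_catC [:: p] [:: q])).
by rewrite !walk_overs /= ?po ?qo // /monochrome /= andbCA.
Qed.

Lemma simple_colorable_rot u v : simple_colorable (u ++ v) <-> simple_colorable (v ++ u).
Proof.
by rewrite /simple_colorable colorable_rotE (uniq_passages_perm (permEl (perm_catC u v))).
Qed.

Lemma simple_colorable_relabel f w :
  injective f -> simple_colorable w <-> simple_colorable (relabel f w).
Proof.
move=> injf; rewrite /simple_colorable uniq_passages_relabel //.
split=> -[uw colw]; split=> //; first exact: relabel_colorable.
exact: colorable_relabel colw.
Qed.

Lemma simple_colorable_swap_overs u p q v : isover p -> isover q ->
  simple_colorable (u ++ [:: p; q] ++ v) <-> simple_colorable (u ++ [:: q; p] ++ v).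
Proof.
move=> po qo; have pq : perm_eq (u ++ [:: p; q] ++ v) (u ++ [:: q; p] ++ v).
  by apply/permP => r; rewrite !count_cat /=; lia.
rewrite /simple_colorable (uniq_passages_perm pq).
by split=> -[uw colw]; split=> //; apply: colorable_swap_overs.
Qed.

(** * Moves inserting fresh crossings: R1, R2 and V^n *)

(* R1, R2 and V^n insert two blocks [A] and [B] of fresh crossings.  A
   coloring extends to them by giving all of them the color of the arc at
   [A] ([neutral_blocks]), and a coloring of the new word has to color them
   this way ([forced_blocks]). *)
Definition neutral_blocks (A B : seq letter) := forall col d g,
  {in labels (A ++ B), forall a, eqv (col a) d} ->
  walk col d A = Some d /\ walk col g B = Some g.

Definition forced_blocks (A B : seq letter) := forall col d d',
  walk col d A = Some d' -> {in labels (A ++ B), forall a, eqv (col a) d}.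

Section Blocks.

Variables A B : seq letter.
Hypotheses (neutralAB : neutral_blocks A B) (forcedAB : forced_blocks A B).

Lemma colorable_insert v w :
  {in labels (A ++ B), forall a, a \notin labels (v ++ w)} ->
  colorable (v ++ w) -> colorable (A ++ v ++ B ++ w).
Proof.
move=> fresh [col [c /andP[]]]; rewrite /closes walk_cat.
case Ev: (walk col c v) => [g|] //= closes_w nmono.
pose col' a := if a \in labels (A ++ B) then c else col a.
have col'E : {in labels (v ++ w), col' =1 col}.
  by move=> a aold; rewrite /col' ifN //; apply: contraL aold; apply: fresh.
have [col'v col'w] : {in labels v, col' =1 col} /\ {in labels w, col' =1 col}.
  by split=> a a_in; apply: col'E; rewrite labels_cat mem_cat a_in ?orbT.
have [walkA walkB] : walk col' c A = Some c /\ walk col' g B = Some g.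
  by apply: neutralAB => a aAB; rewrite /col' aAB eqv_refl.
exists col', c; apply/andP; split.
  rewrite /closes walk_cat walkA /= walk_cat (eq_walk _ col'v) Ev /=.
  by rewrite walk_cat walkB /= (eq_walk _ col'w).
move: nmono; rewrite !monochrome_cat (eq_monochrome _ col'v) (eq_monochrome _ col'w).
by apply: contra => /and4P[_ -> _ ->].
Qed.

Lemma colorable_remove v w : colorable (A ++ v ++ B ++ w) -> colorable (v ++ w).
Proof.
move=> [col [c /andP[]]]; rewrite /closes walk_cat.
case EA: (walk col c A) => [c'|] //= closes_w nmono.
have colAB := forcedAB EA.
have [walkA _] := neutralAB c colAB.
move: EA closes_w; rewrite walkA => -[<-] closes_w.
exists col, c; apply/andP; split.
  move: closes_w; rewrite /closes !walk_cat; case: (walk col c v) => //= g.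
  by rewrite walk_cat (neutralAB g colAB).2.
have : monochrome col c (A ++ B) by apply/allP.
rewrite !monochrome_cat => /andP[monoA monoB]; apply: contra nmono.
by rewrite !monochrome_cat monoA monoB.
Qed.

Lemma colorable_blocks v w :
  {in labels (A ++ B), forall a, a \notin labels (v ++ w)} ->
  colorable (A ++ v ++ B ++ w) <-> colorable (v ++ w).
Proof. by move=> fresh; split; [apply: colorable_remove | apply: colorable_insert]. Qed.

Lemma simple_colorable_blocks u1 v u2 :
  {in labels (A ++ B), forall a, a \notin labels (u1 ++ v ++ u2)} ->
  uniq_passages (A ++ B) ->
  simple_colorable (u1 ++ A ++ v ++ B ++ u2) <-> simple_colorable (u1 ++ v ++ u2).
Proof.
move=> fresh uAB; rewrite /simple_colorable.
rewrite (uniq_passages_insert (N := A ++ B) (w := u1 ++ v ++ u2)) //; last first.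
  by apply/permP => p; rewrite !count_cat; lia.
rewrite (colorable_rotE u1) -!catA (colorable_rotE u1) -catA colorable_blocks //.
by apply: fresh_perm fresh; apply/permP => p; rewrite !count_cat; lia.
Qed.

Lemma simple_colorable_blocks_swap u1 v u2 :
  {in labels (A ++ B), forall a, a \notin labels (u1 ++ v ++ u2)} ->
  uniq_passages (A ++ B) ->
  simple_colorable (u1 ++ B ++ v ++ A ++ u2) <-> simple_colorable (u1 ++ v ++ u2).
Proof.
move=> fresh uAB; rewrite /simple_colorable.
rewrite (uniq_passages_insert (N := A ++ B) (w := u1 ++ v ++ u2)) //; last first.
  by apply/permP => p; rewrite !count_cat; lia.
have -> : u1 ++ v ++ u2 = (u1 ++ v) ++ u2 by rewrite catA.
have -> : u1 ++ B ++ v ++ A ++ u2 = (u1 ++ B ++ v) ++ A ++ u2 by rewrite -!catA.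
rewrite (colorable_rotE (u1 ++ B ++ v)) (colorable_rotE (u1 ++ v)) -!catA.
rewrite (catA u2 u1) colorable_blocks -catA //.
by apply: fresh_perm fresh; apply/permP => p; rewrite !count_cat; lia.
Qed.

End Blocks.

Lemma walk_kink col d a o e :
  walk col d [:: (a, o, e); (a, ~~ o, e)] = if eqv d (col a) then Some d else None.
Proof.
by case: o => /=; rewrite ?eqv_op_id; case: ifP => // da; rewrite op_id // eqv_sym.
Qed.

Lemma kink_neutral a o e : neutral_blocks [:: (a, o, e); (a, ~~ o, e)] [::].
Proof. by move=> col d g colA; rewrite walk_kink eqv_sym colA ?mem_head. Qed.

Lemma kink_forced a o e : forced_blocks [:: (a, o, e); (a, ~~ o, e)] [::].
Proof.
move=> col d d'; rewrite walk_kink; case: ifP => // da _ b.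
by rewrite !inE orbb => /eqP->; rewrite eqv_sym.
Qed.

Lemma simple_colorable_R1 u v a o e : a \notin labels (u ++ v) ->
  simple_colorable (u ++ v) <->
  simple_colorable (u ++ [:: (a, o, e); (a, ~~ o, e)] ++ v).
Proof.
move=> fresh.
have := simple_colorable_blocks (@kink_neutral a o e) (@kink_forced a o e)
  (u1 := u) (v := v) (u2 := [::]).
rewrite /= !cats0 => kinkE; rewrite kinkE //.
  by move=> b; rewrite !inE orbb => /eqP->.
by rewrite /uniq_passages /passage /= inE xpair_eqE eqxx; case: (o).
Qed.

Section R2Blocks.

Variables (a b : nat) (e : bool) (P : seq letter).
Hypothesis P_unders :
  P = [:: (a, false, e); (b, false, ~~ e)] \/ P = [:: (b, false, ~~ e); (a, false, e)].

Lemma labels_R2 : labels ([:: (a, true, e); (b, true, ~~ e)] ++ P) =i [:: a; b].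
Proof. by case: P_unders => -> c; rewrite !inE; case: (c == a); case: (c == b). Qed.

Lemma R2_neutral : neutral_blocks [:: (a, true, e); (b, true, ~~ e)] P.
Proof.
move=> col d g colab.
have [ad bd] : eqv (col a) d /\ eqv (col b) d.
  by rewrite !colab // labels_R2 !inE eqxx ?orbT.
rewrite walk_overs // /monochrome /= ad bd; split=> //.
have ab : eqv (col a) (col b) by apply: eqv_trans ad _; rewrite eqv_sym.
by case: P_unders => -> /=; rewrite (op_eqvl _ _ ab) ?opK ?opNK.
Qed.

Lemma R2_forced : forced_blocks [:: (a, true, e); (b, true, ~~ e)] P.
Proof.
move=> col d d'; rewrite walk_overs //; case: ifP => // /and3P[ad bd _] _ c.
by rewrite labels_R2 !inE => /orP[]/eqP->.
Qed.

End R2Blocks.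

Lemma simple_colorable_R2 u1 v u2 a b e P :
  a \notin labels (u1 ++ v ++ u2) -> b \notin labels (u1 ++ v ++ u2) -> a != b ->
  P = [:: (a, false, e); (b, false, ~~ e)] \/ P = [:: (b, false, ~~ e); (a, false, e)] ->
  simple_colorable (u1 ++ v ++ u2) <->
  simple_colorable (u1 ++ [:: (a, true, e); (b, true, ~~ e)] ++ v ++ P ++ u2).
Proof.
move=> fa fb ab HP; rewrite (simple_colorable_blocks (R2_neutral HP) (R2_forced HP)) //.
  by move=> c; rewrite labels_R2 // !inE => /orP[]/eqP->.
rewrite /uniq_passages /passage; case: HP => -> /=.
all: by rewrite !inE !xpair_eqE ?(eq_sym b a) ?(negbTE ab) !eqxx.
Qed.

Lemma walk_unders col d g (c : seq nat) e : {in c, forall a, eqv (col a) d} ->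
  walk col g [seq (a, false, e) | a <- c] = Some (iter (size c) (op e d) g).
Proof.
elim: c g => [|a c IHc] g //= colc.
rewrite (op_eqvl _ _ (colc a (mem_head a c))) IHc -?iterSr // => b bc.
by apply: colc; rewrite inE bc orbT.
Qed.

Lemma Vn_neutral (c : seq nat) e :
  (forall y x, iter (size c) (op e y) x = x) ->
  neutral_blocks [seq (a, true, e) | a <- c] [seq (a, false, e) | a <- c].
Proof.
move=> iter_id col d g; rewrite labels_cat !labels_block => colc.
have {}colc : {in c, forall a, eqv (col a) d} by move=> a ac; rewrite colc ?mem_cat ?ac.
split; last by rewrite (walk_unders _ _ colc) iter_id.
by rewrite walk_overs ?all_overs // ifT //; apply/allP; rewrite labels_block.
Qed.

Lemma Vn_forced (c : seq nat) e :
  forced_blocks [seq (a, true, e) | a <- c] [seq (a, false, e) | a <- c].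
Proof.
move=> col d d'; rewrite walk_overs ?all_overs //; case: ifP => // /allP colc _ a.
by rewrite labels_cat !labels_block mem_cat orbb => ac; apply: colc; rewrite labels_block.
Qed.

Lemma simple_colorable_Vn u1 v u2 (c : seq nat) o e :
  (forall y x, iter (size c) (op e y) x = x) -> uniq c ->
  all (fun a => a \notin labels (u1 ++ v ++ u2)) c ->
  simple_colorable (u1 ++ v ++ u2) <->
  simple_colorable
    (u1 ++ [seq (a, o, e) | a <- c] ++ v ++ [seq (a, ~~ o, e) | a <- c] ++ u2).
Proof.
move=> iter_id uc /allP fresh.
have freshAB : {in labels ([seq (a, true, e) | a <- c] ++ [seq (a, false, e) | a <- c]),
                forall a, a \notin labels (u1 ++ v ++ u2)}.
  by move=> a aAB; apply: fresh; move: aAB; rewrite labels_cat !labels_block mem_cat orbb.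
have uAB : uniq_passages ([seq (a, true, e) | a <- c] ++ [seq (a, false, e) | a <- c]).
  rewrite /uniq_passages map_cat -!map_comp cat_uniq.
  rewrite !map_inj_uniq // => [|a b [] //|a b [] //].
  by rewrite uc andbT; apply/hasPn => _ /mapP[a _ ->]; apply/mapP => -[b _].
have [neutral forced] := (Vn_neutral iter_id, @Vn_forced c e).
case: o => /=; first by rewrite simple_colorable_blocks.
by rewrite simple_colorable_blocks_swap.
Qed.

(** * Reidemeister III *)

Lemma walk_rev_over_over col col' d x y ex ey (a : bool) :
  col' x = col x -> col' y = col y ->
  let T := (if a then rev else id) [:: (x, true, ex); (y, true, ey)] in
  walk col' d (rev T) = walk col d T.
Proof.
move=> cx cy /=.
by case: a; rewrite /rev /= cx cy; case: (eqv d (col x)); case: (eqv d (col y)).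
Qed.

Lemma walk_rev_under_over col col' d x z ex ez (a : bool) :
  col' x = col x -> col z = op (ex (+) a) (col x) (col' z) ->
  let M := (if a then rev else id) [:: (x, false, ex); (z, true, ez)] in
  walk col' d (rev M) = walk col d M.
Proof.
case: a => cx cz /=; rewrite ?revK.
  symmetry; rewrite /rev /=; move: cx cz.
  by rewrite addbT /= => -> ->; rewrite eqv_opl.
by rewrite /rev /= cx cz addbF eqv_opl opK.
Qed.

Lemma walk_rev_under_under col col' d y z ey ez (a : bool) :
  col' y = col y -> col z = op (ey (+) a) (col y) (col' z) ->
  let B := (if a then rev else id) [:: (y, false, ey); (z, false, ez)] in
  walk col' d (rev B) = walk col d B.
Proof.
case: a => cy cz /=; rewrite ?revK /rev /= cy cz ?addbT ?addbF.
  by rewrite (op_distr ey) opNK.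
by rewrite op_distr.
Qed.

Lemma walk_rev_R3 col col' x y z ex ey ez (a1 a2 a3 : bool) :
  ex (+) a2 = ey (+) a3 -> eqv (col x) (col y) ->
  col' x = col x -> col' y = col y -> col z = op (ex (+) a2) (col x) (col' z) ->
  {in [:: (if a1 then rev else id) [:: (x, true, ex); (y, true, ey)];
          (if a2 then rev else id) [:: (x, false, ex); (z, true, ez)];
          (if a3 then rev else id) [:: (y, false, ey); (z, false, ez)]],
   forall X d, walk col' d (rev X) = walk col d X}.
Proof.
move=> S xy cx cy cz X; rewrite !inE => /or3P[]/eqP-> d.
- exact: walk_rev_over_over.
- exact: walk_rev_under_over.
- by apply: walk_rev_under_under; rewrite // cz (op_eqvl _ _ xy) S.
Qed.

Lemma walk_rev_blocks col col' u1 X1 u2 X2 u3 X3 u4 :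
  {in labels (u1 ++ u2 ++ u3 ++ u4), col' =1 col} ->
  {in [:: X1; X2; X3], forall X d, walk col' d (rev X) = walk col d X} ->
  forall d, walk col' d (u1 ++ rev X1 ++ u2 ++ rev X2 ++ u3 ++ rev X3 ++ u4) =
            walk col d (u1 ++ X1 ++ u2 ++ X2 ++ u3 ++ X3 ++ u4).
Proof.
move=> colu colX.
have walk_u u : u \in [:: u1; u2; u3; u4] -> forall d, walk col' d u = walk col d u.
  move=> uu d; apply: eq_walk => a au; apply: colu.
  by move: uu au; rewrite !inE => /or4P[]/eqP-> au; rewrite !labels_cat !mem_cat au ?orbT.
do 3 (apply: walk_cat_congr; [apply: walk_u; by rewrite !inE eqxx ?orbT|];
      apply: walk_cat_congr; [apply: colX; by rewrite !inE eqxx ?orbT|]).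
by apply: walk_u; rewrite !inE eqxx ?orbT.
Qed.

Lemma eqv_over_over col e e' x y ex ey (a : bool) :
  walk col e ((if a then rev else id) [:: (x, true, ex); (y, true, ey)]) = Some e' ->
  eqv (col x) (col y).
Proof.
case: a; rewrite /rev /=; case: ifP => // e1; case: ifP => // e2 _.
  exact: eqv_transl e2 e1.
exact: eqv_transl e1 e2.
Qed.

Lemma monochrome_recolor col col' c w x z s :
  x \in labels w -> z \in labels w -> x != z ->
  (forall a, a != z -> col' a = col a) -> col z = op s (col x) (col' z) ->
  monochrome col' c w -> monochrome col c w.
Proof.
move=> xw zw xz col'E colz /allP mono; apply/allP => a aw.
case: (eqVneq a z) => [->|az]; last by rewrite -col'E ?mono.
have xc : eqv (col x) c by rewrite -col'E ?mono.
by rewrite colz op_id ?mono // (eqv_trans xc) // eqv_sym mono.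
Qed.

(* Only the crossing [z], where the middle strand passes over the bottom one,
   is recolored: after the move the middle strand reaches [z] from the other
   side of its under-passage at [x]. *)
Lemma colorable_R3 u1 X1 u2 X2 u3 X3 u4 T M B :
  uniq_passages (u1 ++ X1 ++ u2 ++ X2 ++ u3 ++ X3 ++ u4) ->
  r3_config T M B -> perm_eq [:: X1; X2; X3] [:: T; M; B] ->
  colorable (u1 ++ X1 ++ u2 ++ X2 ++ u3 ++ X3 ++ u4) ->
  colorable (u1 ++ rev X1 ++ u2 ++ rev X2 ++ u3 ++ rev X3 ++ u4).
Proof.
move=> uw [x [y [z [ex [ey [ez [a1 [a2 [a3 [[xyz -> -> ->] [S _]]]]]]]]]]] XTMB.
have [Tw xw zw zu] := r3_frame uw XTMB.
move=> [col [c /andP[closes_w nmono]]].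
have {}S : ex (+) a2 = ey (+) a3 by move: S; rewrite addbAC [RHS]addbAC => /addIb.
have [xz yz] : x != z /\ y != z.
  by move: xyz; rewrite /= !inE !negb_or => /and3P[/andP[_ ->] ->].
have xy : eqv (col x) (col y).
  move: closes_w; rewrite /closes; case Ew: walk => [r|] // _.
  by have [e [e' /eqv_over_over]] := walk_infix Ew Tw.
pose s := ex (+) a2.
pose col' a := if a == z then op (~~ s) (col x) (col z) else col a.
have col'E a : a != z -> col' a = col a by rewrite /col' => /negbTE ->.
have colz : col z = op s (col x) (col' z) by rewrite /col' eqxx opNK.
exists col', c; apply/andP; split.
  rewrite /closes (walk_rev_blocks (col := col)) // => [a au|X XXs].
    by apply: col'E; apply: contraNneq zu => <-.
  apply: (walk_rev_R3 (a1 := a1) (ez := ez) S xy (col'E x xz) (col'E y yz) colz).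
  by rewrite -(perm_mem XTMB).
apply: contra nmono; rewrite -(monochrome_perm _ _ (perm_rev_blocks _ _ _ _ _ _ _)).
exact: monochrome_recolor xw zw xz col'E colz.
Qed.

Lemma simple_colorable_R3 u1 X1 u2 X2 u3 X3 u4 T M B :
  r3_config T M B -> perm_eq [:: X1; X2; X3] [:: T; M; B] ->
  simple_colorable (u1 ++ X1 ++ u2 ++ X2 ++ u3 ++ X3 ++ u4) <->
  simple_colorable (u1 ++ rev X1 ++ u2 ++ rev X2 ++ u3 ++ rev X3 ++ u4).
Proof.
move=> TMB XTMB; have ww' := perm_rev_blocks u1 X1 u2 X2 u3 X3 u4.
rewrite /simple_colorable -(uniq_passages_perm ww').
split=> -[uw colw]; split=> //; first exact: colorable_R3 uw TMB XTMB colw.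
have uw' : uniq_passages (u1 ++ rev X1 ++ u2 ++ rev X2 ++ u3 ++ rev X3 ++ u4).
  by rewrite -(uniq_passages_perm ww').
by have := colorable_R3 uw' (r3_config_rev TMB) (perm_map rev XTMB) colw; rewrite !revK.
Qed.

Lemma welded_step_simple_colorable w w' :
  welded_step w w' -> simple_colorable w <-> simple_colorable w'.
Proof.
case=> {w w'}.
- exact: simple_colorable_rot.
- by move=> w f; apply: simple_colorable_relabel.
- exact: simple_colorable_R1.
- exact: simple_colorable_R2.
- exact: simple_colorable_R3.
- by move=> u v a b e f; apply: simple_colorable_swap_overs.
Qed.

Lemma Vn_equivalent_simple_colorable n w w' :
  (forall b y x, iter n (op b y) x = x) ->
  Vn_equivalent n w w' -> simple_colorable w <-> simple_colorable w'.
Proof.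
move=> iter_id; elim=> {w w'} [//|w w' []|w w' _ IH|w1 w2 w3 _ IH12 _ IH23].
- exact: welded_step_simple_colorable.
- by case=> u1 v u2 c o e size_c; apply: simple_colorable_Vn; rewrite size_c.
- by rewrite IH.
- by rewrite IH12.
Qed.

Lemma not_simple_colorable_nil : ~ simple_colorable [::].
Proof. by move=> [_ [col [c]]]; rewrite /coloring andbF. Qed.

End Colorings.

Definition trefoil : seq letter :=
  [:: (1, true, true); (2, false, true); (3, true, true);
      (1, false, true); (2, true, true); (3, false, true)].

Lemma trefoil_gauss : gauss_word trefoil.
Proof. by move=> a; rewrite /= !inE => /or4P[||| /or3P[||]] /eqP->; exists true. Qed.

(** * The symplectic quandle modulo sign *)

Import GRing.Theory.

Section SymplecticQuandle.

Local Open Scope ring_scope.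

Variable R : comNzRingType.

Definition symp (x y : R * R) : R := x.1 * y.2 - x.2 * y.1.

Definition transvection (b : bool) (y x : R * R) : R * R :=
  let k := (if b then 1 else -1) * symp x y in (x.1 + k * y.1, x.2 + k * y.2).

Definition eqv_sign (x y : R * R) : bool := (x == y) || (x == - y).

Lemma eqv_sign_refl : reflexive eqv_sign.
Proof. by move=> x; rewrite /eqv_sign eqxx. Qed.

Lemma eqv_sign_sym : symmetric eqv_sign.
Proof.
move=> x y; rewrite /eqv_sign eq_sym; congr (_ || _).
by apply/eqP/eqP => ->; rewrite opprK.
Qed.

Lemma eqv_sign_trans : transitive eqv_sign.
Proof.
by move=> y x z /orP[]/eqP-> /orP[]/eqP->; rewrite /eqv_sign ?opprK eqxx ?orbT.
Qed.

Lemma transvectionK b y : cancel (transvection b y) (transvection (~~ b) y).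
Proof.
case=> x1 x2; case: y b => y1 y2 [];
  by rewrite /transvection /symp /=; congr pair; ring.
Qed.

Lemma transvectionNl b y x : transvection b (- y) x = transvection b y x.
Proof.
case: x y b => x1 x2 [y1 y2] [];
  by rewrite /transvection /symp /=; congr pair; ring.
Qed.

Lemma transvectionNr b y x : transvection b y (- x) = - transvection b y x.
Proof.
case: x y b => x1 x2 [y1 y2] [];
  by apply: injective_projections; rewrite /transvection /symp /=; ring.
Qed.

Lemma transvection_eqvl b y y' x :
  eqv_sign y y' -> transvection b y x = transvection b y' x.
Proof. by case/orP=> /eqP->; rewrite ?transvectionNl. Qed.

Lemma transvection_eqvr b y x x' :
  eqv_sign x x' -> eqv_sign (transvection b y x) (transvection b y x').
Proof. by case/orP=> /eqP->; rewrite ?transvectionNr /eqv_sign eqxx ?orbT. Qed.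

Lemma transvectionxx b y : transvection b y y = y.
Proof.
case: y b => y1 y2 [];
  by rewrite /transvection /symp /=; congr pair; ring.
Qed.

Lemma transvection_distr b b' t m x :
  transvection b t (transvection b' m x) =
  transvection b' (transvection b t m) (transvection b t x).
Proof.
case: x t m => x1 x2 [t1 t2] [m1 m2].
by case: b b' => [] []; rewrite /transvection /symp /=; congr pair; ring.
Qed.

Lemma iter_transvection k b y x :
  iter k (transvection b y) x =
  (x.1 + k%:R * ((if b then 1 else -1) * symp x y) * y.1,
   x.2 + k%:R * ((if b then 1 else -1) * symp x y) * y.2).
Proof.
case: x y => x1 x2 [y1 y2]; elim: k => [|k IHk] /=; first by rewrite !mul0r !addr0.
by rewrite IHk /transvection /symp /= -addn1 natrD; congr pair; ring.
Qed.

Lemma iter_transvection_char n b y x :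
  n%:R = 0 :> R -> iter n (transvection b y) x = x.
Proof. by move=> n0; rewrite iter_transvection n0 !mul0r !addr0; case: x. Qed.

Lemma Vn_equivalent_symplectic n w w' : n%:R = 0 :> R ->
  Vn_equivalent n w w' ->
  simple_colorable eqv_sign transvection w <-> simple_colorable eqv_sign transvection w'.
Proof.
move=> n0; apply: Vn_equivalent_simple_colorable.
- exact: eqv_sign_refl.
- exact: eqv_sign_sym.
- exact: eqv_sign_trans.
- exact: transvectionK.
- exact: transvection_eqvl.
- exact: transvection_eqvr.
- exact: transvectionxx.
- exact: transvection_distr.
- by move=> b y x; apply: iter_transvection_char.
Qed.

Lemma trefoil_colorable : colorable eqv_sign transvection trefoil.
Proof.
pose col a : R * R := if a == 1%N then (1, 0) else if a == 2%N then (0, 1) else (1, 1).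
have [c1 c2 c3] : [/\ col 1%N = (1, 0), col 2%N = (0, 1) & col 3%N = (1, 1)] by [].
have t1 : transvection true (0, 1) (1, 0) = (1, 1).
  by apply: injective_projections; rewrite /transvection /symp /=; ring.
have t2 : transvection true (1, 0) (1, 1) = (0, 1).
  by apply: injective_projections; rewrite /transvection /symp /=; ring.
have t3 : transvection true (1, 1) (0, 1) = - (1, 0).
  by apply: injective_projections; rewrite /transvection /symp /=; ring.
have e10 : eqv_sign (- (1, 0)) (1, 0) by rewrite /eqv_sign eqxx orbT.
have n21 : eqv_sign (0, 1) (1, 0) = false.
  by apply: negbTE; rewrite negb_or; apply/andP; split; apply/eqP => /(congr1 snd) /eqP;
     rewrite /= ?oppr0 oner_eq0.
exists col, (1, 0); rewrite /coloring /closes /= c1 c2 c3 t1 t2 t3 !eqv_sign_refl.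
by rewrite e10 /monochrome /= c2 n21 !andbF.
Qed.

End SymplecticQuandle.

Theorem proposition5p2 (n : nat) : 2 <= n ->
  exists K : seq letter, gauss_word K /\ ~ Vn_equivalent n K [::].
Proof.
move=> n_gt1; exists trefoil; split; first exact: trefoil_gauss.
move=> /(Vn_equivalent_symplectic (R := 'Z_n) (pchar_Zp n_gt1)) [trefoil_nil _].
apply: not_simple_colorable_nil; apply: trefoil_nil.
by split; last exact: trefoil_colorable.
Qed.
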